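(* Let $r\geq 2$ be an integer and let $x_i$ ($1\le i\le r$) and $y_{i,j}$ ($2\le i\le j\le r$) be formal variables. Let $\mathcal{U}_r$ be the set of unordered increasing trees with vertex-set $\{1,\dots,r\}$. For $T\in\mathcal{U}_r$ define \[ \mathrm{wt}_y(T)=\prod_{v=2}^r\Big(x_{f_T(v)}\sum_{u\in \mathfrak{h}_T(v)} y_{v,u}\Big). \] Then \[ \sum_{T\in\mathcal{U}_r}\mathrm{wt}_y(T)= x_1\,y_{r,r}\prod_{i=2}^{r-1}\Bigg(\sum_{j=1}^{i} x_j\,y_{i,i}+\sum_{j=i+1}^{r} x_i\,y_{i,j}\Bigg). \]
   Context: A rooted tree has its edges oriented towards the root; the head of an edge is the father of its tail (the son). For a non-root vertex $v$ of a rooted tree $T$, $f_T(v)$ denotes its father. Descendants of a vertex are its sons and, recursively, descendants of its sons. An unordered increasing tree with vertex-set $\{1,\dots,r\}$ is a rooted tree on these labelled vertices (sons of a vertex are not ordered) such that the label of each son is larger than the label of its father (so the root is $1$). The hook $\mathfrak{h}_T(v)$ is the set consisting of $v$ and all its descendants in $T$. *)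

From mathcomp Require Import all_boot all_order all_algebra.
Set Implicit Arguments. Unset Strict Implicit. Unset Printing Implicit Defensive.
Import GRing.Theory.
Local Open Scope ring_scope.

(* Vertex v : 'I_r stands for the label v.+1 in {1,...,r}; the root 1 is ord 0.
   A rooted tree on 'I_r is encoded by its father map T : {ffun 'I_r -> 'I_r}
   (with the convention T root = root).  It is an unordered increasing tree
   iff the root is fixed and every non-root vertex has a father with a
   smaller label (this determines a tree rooted at 1, and every increasing
   tree arises from exactly one such map). *)
Definition incr_tree (r : nat) (T : {ffun 'I_r -> 'I_r}) : bool :=
  [forall v : 'I_r, if (v == 0 :> nat) then T v == v else (T v < v)%N].

(* Hook of v: v together with all its descendants, i.e. all u some iterate
   of the father map sends to v (depth < r so r iterates suffice). *)
Definition hook (r : nat) (T : {ffun 'I_r -> 'I_r}) (v : 'I_r) : {set 'I_r} :=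
  [set u : 'I_r | [exists k : 'I_r.+1, iter k T u == v]].

Definition wt_y (R : comRingType) (r : nat) (x : nat -> R) (y : nat -> nat -> R)
  (T : {ffun 'I_r -> 'I_r}) : R :=
  \prod_(v : 'I_r | (0 < v)%N)
     (x (T v).+1 * \sum_(u in hook T v) y v.+1 u.+1).

From mathcomp Require Import all_boot all_order all_algebra.
From mathcomp Require Import zify ring.
Import GRing.Theory.
Set Implicit Arguments. Unset Strict Implicit. Unset Printing Implicit Defensive.
Local Open Scope ring_scope.

(* The largest vertex of an increasing tree is a leaf, so a tree on [k+2]
   vertices is a tree on [k+1] vertices with the leaf [k+2] grafted onto some
   vertex [p].  Grafting adds [y_{w,k+2}] to the hook factor of every ancestor
   [w] of [p].  Expanding the product of the new factors against the old ones
   by telescoping, [prod a = prod b + sum_m (prod_{i<m} a) (a_m - b_m)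
   (prod_{i>m} b)], and summing over [p], the leading term is
   [(x_1 + ... + x_{k+1}) y_{k+2,k+2}] times the old weight, and the term of
   index [m] only survives for [p] in the hook of [m], where it is again the
   weight of the old tree for the modified variables [y_merge].  This gives a
   recursion in the number of vertices, uniform in [y]; the closed form
   satisfies the same recursion by the same telescoping identity. *)

Section IncreasingTree.
Variables (r : nat) (T : {ffun 'I_r -> 'I_r}).

Lemma hook_refl (v : 'I_r) : v \in hook T v.
Proof. by rewrite inE; apply/existsP; exists ord0. Qed.

Hypothesis hT : incr_tree T.

Lemma incr_tree_root (v : 'I_r) : v = 0 :> nat -> T v = v.
Proof. by move=> v0; have := forallP hT v; rewrite v0 eqxx => /eqP. Qed.

Lemma incr_tree_lt (v : 'I_r) : v != 0 :> nat -> (T v < v)%N.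
Proof. by move=> v0; have := forallP hT v; rewrite (negbTE v0). Qed.

Lemma incr_tree_le (v : 'I_r) : (T v <= v)%N.
Proof.
have [v0|v0] := eqVneq (v : nat) 0; first by rewrite incr_tree_root.
exact/ltnW/incr_tree_lt.
Qed.

Lemma iter_incr_tree_le k (u : 'I_r) : (iter k T u <= u - k)%N.
Proof.
elim: k => [|k IH]; first by rewrite subn0.
rewrite iterS; have [w0|w0] := eqVneq (iter k T u : nat) 0.
  by rewrite incr_tree_root // w0.
by have := incr_tree_lt w0; move: IH; clear; lia.
Qed.

Lemma iter_incr_tree_mono (u : 'I_r) a b : (a <= b)%N ->
  (iter b T u <= iter a T u)%N.
Proof.
move/subnK <-; elim: (b - a)%N => [//|c IH].
by rewrite addSn iterS (leq_trans (incr_tree_le _)).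
Qed.

(* Iterates beyond [u] all stay at the root, so [r] of them suffice. *)
Lemma hookP (u v : 'I_r) : reflect (exists k, iter k T u = v) (u \in hook T v).
Proof.
rewrite inE; apply: (iffP existsP) => [[k /eqP]|[k <-]]; first by exists k.
have lt_min : (minn k u < r.+1)%N.
  by rewrite ltnS (leq_trans (geq_minr _ _)) // ltnW.
exists (inord (minn k u)); rewrite inordK //; apply/eqP.
have [//|uk] := leqP k u.
have root_of j : (u <= j)%N -> iter j T u = 0 :> nat.
  move=> uj; apply/eqP; rewrite -leqn0 -subn_eq0 in uj *.
  by rewrite -(eqP uj) iter_incr_tree_le.
by apply: val_inj; rewrite /= !root_of // ltnW.
Qed.

Lemma hook_descendant (p m w : 'I_r) : p \in hook T m -> (w < m)%N ->
  (p \in hook T w) = (m \in hook T w).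
Proof.
move=> /hookP [a ha] wm; apply/hookP/hookP => [[b hb]|[b hb]]; last first.
  by exists (b + a)%N; rewrite iterD ha.
have ab : (a <= b)%N.
  rewrite leqNgt; apply/negP => /ltnW /(iter_incr_tree_mono p).
  by rewrite ha hb; move: wm; lia.
by exists (b - a)%N; rewrite -ha -iterD subnK.
Qed.

End IncreasingTree.

Section Graft.
Variable n : nat.
Notation widen := (widen_ord (leqnSn n)).

Definition graft (T : {ffun 'I_n -> 'I_n}) (p : 'I_n) : {ffun 'I_n.+1 -> 'I_n.+1} :=
  [ffun v => if unlift ord_max v is Some w then widen (T w) else widen p].

Lemma widen_lift (w : 'I_n) : widen w = lift ord_max w.
Proof. by apply: val_inj; rewrite /= /bump leqNgt ltn_ord. Qed.

Variables (T : {ffun 'I_n -> 'I_n}) (p : 'I_n).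

Let n_gt0 : (0 < n)%N := leq_ltn_trans (leq0n p) (ltn_ord p).

Lemma graft_widen w : graft T p (widen w) = widen (T w).
Proof. by rewrite ffunE widen_lift liftK. Qed.

Lemma graft_max : graft T p ord_max = widen p.
Proof. by rewrite ffunE unlift_none. Qed.

Lemma iter_graft_widen k w : iter k (graft T p) (widen w) = widen (iter k T w).
Proof. by elim: k => [//|k IH]; rewrite !iterS IH graft_widen. Qed.

Lemma incr_tree_graftE : incr_tree (graft T p) = incr_tree T.
Proof.
apply/forallP/forallP => hT v.
  by have := hT (widen v); rewrite graft_widen.
case: (unliftP ord_max v) => [w ->|->]; last by rewrite graft_max /= gtn_eqF.
by rewrite -widen_lift graft_widen; exact: hT.
Qed.

Hypothesis hT : incr_tree T.

Let incr_tree_graft : incr_tree (graft T p). Proof. by rewrite incr_tree_graftE. Qed.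

Lemma hook_graft_widen u v :
  (widen u \in hook (graft T p) (widen v)) = (u \in hook T v).
Proof.
apply/(hookP incr_tree_graft)/(hookP hT) => [[k]|[k hk]]; last first.
  by exists k; rewrite iter_graft_widen hk.
by rewrite iter_graft_widen => /(congr1 val) /= /ord_inj hk; exists k.
Qed.

Lemma hook_graft_max v : (ord_max \in hook (graft T p) (widen v)) = (p \in hook T v).
Proof.
apply/(hookP incr_tree_graft)/(hookP hT) => [[[|k] hk]|[k hk]].
- by move: (ltn_ord v); rewrite -[v : nat]/(val (widen v)) -hk ltnn.
- move: hk; rewrite iterSr graft_max iter_graft_widen => /(congr1 val) /= /ord_inj hk.
  by exists k.
- by exists k.+1; rewrite iterSr graft_max iter_graft_widen hk.
Qed.

Lemma hook_widen_graft_max u : (widen u \in hook (graft T p) ord_max) = false.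
Proof.
apply/(hookP incr_tree_graft) => -[k]; rewrite iter_graft_widen.
by move/(congr1 val) => /= hk; have := ltn_ord (iter k T u); rewrite hk ltnn.
Qed.

Variable R : comNzRingType.

Lemma sum_hook_graft_max (F : 'I_n.+1 -> R) :
  \sum_(u in hook (graft T p) ord_max) F u = F ord_max.
Proof.
rewrite big_mkcond big_ord_recr /= hook_refl big1 ?add0r // => u _.
by rewrite hook_widen_graft_max.
Qed.

Lemma sum_hook_graft_widen (F : 'I_n.+1 -> R) w :
  \sum_(u in hook (graft T p) (widen w)) F u =
  \sum_(u in hook T w) F (widen u) + (if p \in hook T w then F ord_max else 0).
Proof.
rewrite big_mkcond big_ord_recr /= hook_graft_max [in RHS]big_mkcond.
by congr (_ + _); apply: eq_bigr => u _; rewrite hook_graft_widen.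
Qed.

Lemma wt_y_graft (x : nat -> R) (y : nat -> nat -> R) :
  wt_y x y (graft T p) = x p.+1 * y n.+1 n.+1 *
  \prod_(w : 'I_n | (0 < w)%N)
     (x (T w).+1 * (\sum_(u in hook T w) y w.+1 u.+1
                    + (if p \in hook T w then y w.+1 n.+1 else 0))).
Proof.
rewrite /wt_y big_mkcond big_ord_recr /= n_gt0 graft_max sum_hook_graft_max mulrC.
rewrite [in RHS]big_mkcond; congr (_ * _); apply: eq_bigr => w _ /=.
by case: ifP => // _; rewrite graft_widen sum_hook_graft_widen.
Qed.

End Graft.

Section Ungraft.
Variable k : nat.
Notation widen := (widen_ord (leqnSn k.+1)).

Definition ungraft (T : {ffun 'I_k.+2 -> 'I_k.+2}) :
    {ffun 'I_k.+1 -> 'I_k.+1} * 'I_k.+1 :=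
  ([ffun w => inord (T (widen w))], inord (T ord_max)).

Lemma ungraft_graft T p : ungraft (graft T p) = (T, p).
Proof.
rewrite /ungraft graft_max; congr pair; last by apply: val_inj; rewrite /= inordK.
by apply/ffunP => w; rewrite ffunE graft_widen; apply: val_inj; rewrite /= inordK.
Qed.

Lemma graft_ungraft T : incr_tree T -> graft (ungraft T).1 (ungraft T).2 = T.
Proof.
move=> hT; apply/ffunP => v; apply: val_inj.
case: (unliftP ord_max v) => [w ->|->] /=; last first.
  by rewrite graft_max /= inordK // (incr_tree_lt hT).
rewrite -widen_lift graft_widen /= ffunE /= inordK //.
exact: leq_ltn_trans (incr_tree_le hT (widen w)) (ltn_ord w).
Qed.

Lemma sum_incr_tree_graft (R : comNzRingType) (F : {ffun 'I_k.+2 -> 'I_k.+2} -> R) :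
  \sum_(T | incr_tree T) F T =
  \sum_(T : {ffun 'I_k.+1 -> 'I_k.+1} | incr_tree T)
     \sum_(p : 'I_k.+1) F (graft T p).
Proof.
rewrite pair_big_dep (reindex_onto (fun q => graft q.1 q.2) ungraft) /=; last first.
  exact: graft_ungraft.
by apply: eq_bigl => -[T p] /=; rewrite incr_tree_graftE ungraft_graft eqxx andbT.
Qed.

End Ungraft.

Section Telescope.
Variable R : comPzRingType.

Definition tele_factor (a b : nat -> R) (m i : nat) : R :=
  if (i < m)%N then a i else if i == m then a i - b i else b i.

Lemma prod_telescope (a b : nat -> R) j k :
  \prod_(j <= i < k) a i =
  \prod_(j <= i < k) b i + \sum_(j <= m < k) \prod_(j <= i < k) tele_factor a b m i.
Proof.
elim: k => [|k IH]; first by rewrite !big_geq // addr0.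
have [jk|kj] := leqP j k; last by rewrite !big_geq // addr0.
have last_b m : (m < k)%N ->
    \prod_(j <= i < k.+1) tele_factor a b m i =
    (\prod_(j <= i < k) tele_factor a b m i) * b k.
  by move=> mk; rewrite big_nat_recr //= /tele_factor ltnNge (ltnW mk) gtn_eqF.
have first_a : \prod_(j <= i < k) tele_factor a b k i = \prod_(j <= i < k) a i.
  by apply: eq_big_nat => i /andP [_ ik]; rewrite /tele_factor ik.
rewrite !big_nat_recr //= (eq_big_nat _ _ (fun m hm => last_b m (proj2 (andP hm)))).
by rewrite -mulr_suml first_a IH /tele_factor ltnn eqxx; ring.
Qed.

Lemma prod_telescope_ord k (a b : 'I_k.+1 -> R) :
  \prod_i a i = \prod_i b i +
  \sum_(m : 'I_k.+1) \prod_(i : 'I_k.+1)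
     (if (i < m)%N then a i else if i == m then a i - b i else b i).
Proof.
have to_nat (f : 'I_k.+1 -> R) : \prod_i f i = \prod_(0 <= i < k.+1) f (inord i).
  by rewrite big_mkord; apply: eq_bigr => i _; rewrite inord_val.
rewrite !to_nat (prod_telescope (a \o inord) (b \o inord)); congr (_ + _).
rewrite big_mkord; apply: eq_bigr => m _; rewrite to_nat.
apply: eq_big_nat => i /andP [_ ik]; rewrite /tele_factor /= !inordK //.
by rewrite -[inord i == m]val_eqE /= inordK.
Qed.

Lemma prod_mul_at (I : eqType) (s : seq I) (m : I) (f : I -> R) (c : R) :
  uniq s -> m \in s ->
  \prod_(i <- s) (if i == m then f i * c else f i) = c * \prod_(i <- s) f i.
Proof.
move=> s_uniq ms; rewrite (bigD1_seq m) //= eqxx [in RHS](bigD1_seq m) //=.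
rewrite (eq_bigr f); last by move=> i /negbTE ->.
by rewrite -mulrA mulrCA.
Qed.

Lemma sum_if_eq (I : finType) (S : {pred I}) (m : I) (d : R) :
  \sum_(u in S) (if u == m then d else 0) = if m \in S then d else 0.
Proof.
rewrite big_mkcond (bigD1 m) //= eqxx big1 ?addr0 // => u /negbTE ->.
by case: ifP.
Qed.

End Telescope.

(* Summing over the father [p] of the new leaf [r] inside the hook of [l]:
   vertex [l] now carries [y_{l,r} x_u] for [u] in its hook, and every vertex
   [a < l] carries [y_{a,r}] on top of [y_{a,l}]. *)
Definition y_merge (R : comNzRingType) (r : nat) (x : nat -> R) (y : nat -> nat -> R)
    (l : nat) : nat -> nat -> R :=
  fun a b => if (a < l)%N then y a b + (if b == l then y a r else 0)
             else if a == l then y a r * x b else y a b.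

Section GraftSum.
Variables (R : comNzRingType) (k : nat) (x : nat -> R) (y : nat -> nat -> R).
Variable T : {ffun 'I_k.+1 -> 'I_k.+1}.
Hypothesis hT : incr_tree T.

Let Y (w : 'I_k.+1) := \sum_(u in hook T w) y w.+1 u.+1.
Let c (w : 'I_k.+1) := y w.+1 k.+2.
Let A (p w : 'I_k.+1) :=
  if (0 < w)%N then x (T w).+1 * (Y w + (if p \in hook T w then c w else 0)) else 1.
Let B (w : 'I_k.+1) := if (0 < w)%N then x (T w).+1 * Y w else 1.
Let Q (m w : 'I_k.+1) :=
  if (w < m)%N then A m w else if w == m then x (T w).+1 * c w else B w.

Lemma prod_tele_hook (p m : 'I_k.+1) :
  \prod_(w : 'I_k.+1)
     (if (w < m)%N then A p w else if w == m then A p w - B w else B w) =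
  if (0 < m)%N && (p \in hook T m) then \prod_(w : 'I_k.+1) Q m w else 0.
Proof.
case: ifP => [/andP [m_gt0 pm]|p_out].
  apply: eq_bigr => w _; rewrite /Q; case: ltnP => [wm|mw].
    by rewrite /A (hook_descendant hT pm wm).
  by case: eqP => [->|//]; rewrite /A /B m_gt0 pm; ring.
rewrite (bigD1 m) //= ltnn eqxx /A /B.
by case: (0 < m)%N p_out => /= [->|_]; rewrite ?addr0 subrr mul0r.
Qed.

Lemma wt_y_merge (m : 'I_k.+1) : (0 < m)%N ->
  wt_y x (y_merge k.+2 x y m.+1) T =
  (\sum_(p in hook T m) x p.+1) * \prod_(w : 'I_k.+1) Q m w.
Proof.
move=> m_gt0; rewrite -(prod_mul_at (m := m)) ?index_enum_uniq ?mem_index_enum //.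
rewrite /wt_y big_mkcond; apply: eq_bigr => w _ /=; rewrite /Q /y_merge ltnS.
case: (ltngtP w m) => [wm|mw|/val_inj ->]; rewrite ?eqSS -?[w == m]val_eqE.
- rewrite (ltn_eqF wm) /A; case: ifP => // _; rewrite big_split /=.
  by under [X in _ + X]eq_bigr do rewrite eqSS val_eqE; rewrite sum_if_eq.
- by rewrite /B (gtn_eqF mw) (ltn_trans m_gt0 mw).
- by rewrite !eqxx m_gt0 -mulrA [in RHS]mulr_sumr.
Qed.

Lemma sum_wt_y_graft :
  \sum_(p : 'I_k.+1) wt_y x y (graft T p) =
  y k.+2 k.+2 * ((\sum_(1 <= j < k.+2) x j) * wt_y x y T
                 + \sum_(2 <= l < k.+2) wt_y x (y_merge k.+2 x y l) T).
Proof.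
have wtT : wt_y x y T = \prod_(w : 'I_k.+1) B w by rewrite /wt_y big_mkcond.
have wtG p :
    wt_y x y (graft T p) = y k.+2 k.+2 * (x p.+1 * \prod_(w : 'I_k.+1) A p w).
  by rewrite wt_y_graft // big_mkcond -mulrA mulrCA.
under eq_bigr => p _ do rewrite wtG (prod_telescope_ord (A p) B) mulrDr mulr_sumr.
rewrite -mulr_sumr big_split /= -mulr_suml wtT; congr (_ * (_ * _ + _)).
  by rewrite big_add1 big_mkord.
rewrite exchange_big /= big_add1 /= (big_nat_widenl 1 0) // big_mkord [RHS]big_mkcond.
apply: eq_bigr => m _ /=; under eq_bigr do rewrite prod_tele_hook.
case: ifP => [m_gt0|_]; last by rewrite big1 // => p _; rewrite mulr0.
rewrite wt_y_merge // mulr_suml [RHS]big_mkcond; apply: eq_bigr => p _ /=.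
by case: ifP; rewrite ?mulr0.
Qed.

End GraftSum.

Definition closed_form_factor (R : comNzRingType) (x : nat -> R) (r : nat)
    (z : nat -> nat -> R) (i : nat) : R :=
  \sum_(1 <= j < i.+1) x j * z i i + \sum_(i.+1 <= j < r.+1) x i * z i j.

Definition closed_form (R : comNzRingType) (x : nat -> R) (r : nat)
    (z : nat -> nat -> R) : R :=
  x 1%N * z r r * \prod_(2 <= i < r) closed_form_factor x r z i.

Section ClosedFormStep.
Variables (R : comNzRingType) (x : nat -> R) (y : nat -> nat -> R) (N : nat).
Notation r := N.+1.
Notation ym := (y_merge r x y).
Let S := \sum_(1 <= j < r) x j.

Lemma closed_form_factor_succ i : (i <= N)%N ->
  closed_form_factor x r y i = closed_form_factor x N y i + x i * y i r.
Proof.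
by move=> iN; rewrite /closed_form_factor [X in _ + X]big_nat_recr //= addrA.
Qed.

Lemma closed_form_factor_merge_lt i l : (i < l)%N -> (l <= N)%N ->
  closed_form_factor x N (ym l) i = closed_form_factor x r y i.
Proof.
move=> il lN; rewrite closed_form_factor_succ ?(leq_trans (ltnW il)) //.
rewrite /closed_form_factor /y_merge il (ltn_eqF il) addr0 -addrA; congr (_ + _).
under eq_bigr do rewrite mulrDr; rewrite big_split /=; congr (_ + _).
by rewrite -mulr_sumr -big_mkcond big_nat1_eq il ltnS lN.
Qed.

Lemma closed_form_factor_merge_gt i l : (l < i)%N ->
  closed_form_factor x N (ym l) i = closed_form_factor x N y i.
Proof.
by move=> li; rewrite /closed_form_factor /y_merge ltnNge (ltnW li) /= gtn_eqF.
Qed.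

Lemma closed_form_factor_merge_eq l : (0 < l <= N)%N ->
  closed_form_factor x N (ym l) l = x l * y l r * S.
Proof.
move=> /andP [l_gt0 lN]; rewrite /closed_form_factor /y_merge ltnn eqxx /S.
rewrite [in RHS](big_cat_nat _ (n := l.+1)) //= mulrDr !mulr_sumr.
by congr (_ + _); apply: eq_bigr => j _; ring.
Qed.

Lemma closed_form_merge_last : closed_form x N (ym N) =
  x 1%N * y N r * x N * \prod_(2 <= i < N) closed_form_factor x r y i.
Proof.
rewrite /closed_form {1}/y_merge ltnn eqxx mulrA; congr (_ * _).
by apply: eq_big_nat => i /andP [_ iN]; rewrite closed_form_factor_merge_lt.
Qed.

Lemma closed_form_merge_mid l : (2 <= l < N)%N ->
  closed_form x N (ym l) = x 1%N * y N N * S *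
    \prod_(2 <= i < N)
      tele_factor (closed_form_factor x r y) (closed_form_factor x N y) l i.
Proof.
move=> /andP [l_ge2 lN]; have lN' := ltnW lN.
rewrite /closed_form {1}/y_merge ltnNge lN' /= gtn_eqF // -!mulrA; congr (_ * (_ * _)).
rewrite -(prod_mul_at (m := l)) ?iota_uniq ?mem_index_iota ?l_ge2 //.
apply: eq_big_nat => i /andP [_ iN]; rewrite /tele_factor.
case: (ltngtP i l) => [il|li|->].
- by rewrite closed_form_factor_merge_lt.
- by rewrite closed_form_factor_merge_gt.
rewrite closed_form_factor_merge_eq ?(leq_trans _ l_ge2) ?lN' //.
by rewrite closed_form_factor_succ //; ring.
Qed.

Lemma closed_form_step : (2 <= N)%N ->
  y r r * (S * closed_form x N y + \sum_(2 <= l < r) closed_form x N (ym l)) =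
  closed_form x r y.
Proof.
move=> N_ge2; rewrite big_nat_recr //= closed_form_merge_last.
rewrite (eq_big_nat _ _ (fun l hl => closed_form_merge_mid hl)) -mulr_sumr.
rewrite /closed_form [in RHS]big_nat_recr //=.
have ->: closed_form_factor x r y N = S * y N N + x N * y N r.
  by rewrite /closed_form_factor big_nat1 mulr_suml.
by rewrite (prod_telescope (closed_form_factor x r y) (closed_form_factor x N y)); ring.
Qed.

End ClosedFormStep.

Definition wt_sum (R : comNzRingType) (r : nat) (x : nat -> R)
    (y : nat -> nat -> R) : R :=
  \sum_(T : {ffun 'I_r -> 'I_r} | incr_tree T) wt_y x y T.

Section WtSum.
Variables (R : comNzRingType) (x : nat -> R).

Lemma wt_sum1 y : wt_sum 1 x y = 1.
Proof.
have ->: wt_sum 1 x y = wt_y x y [ffun => @ord0 0].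
  apply: big_pred1 => T /=; apply/idP/eqP => [_|->]; last first.
    by apply/forallP => v; rewrite ffunE; case: v => [[|]].
  by apply/ffunP => v; rewrite ffunE; apply: val_inj; case: (T v) => [[|]].
by rewrite /wt_y big_pred0 // => -[[|]].
Qed.

Lemma wt_sum_succ k y :
  wt_sum k.+2 x y = y k.+2 k.+2 * ((\sum_(1 <= j < k.+2) x j) * wt_sum k.+1 x y
                      + \sum_(2 <= l < k.+2) wt_sum k.+1 x (y_merge k.+2 x y l)).
Proof.
rewrite /wt_sum sum_incr_tree_graft.
under eq_bigr => T hT do rewrite sum_wt_y_graft //.
by rewrite -mulr_sumr big_split /= -mulr_sumr exchange_big.
Qed.

Lemma wt_sum_closed_form n y : wt_sum n.+2 x y = closed_form x n.+2 y.
Proof.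
elim: n y => [|n IH] y.
  by rewrite wt_sum_succ wt_sum1 big_nat1 big_geq // /closed_form big_geq //; ring.
by rewrite wt_sum_succ IH (eq_big_nat _ _ (fun l _ => IH _)) closed_form_step.
Qed.

End WtSum.

Theorem theorem1p1 (R : comRingType) (r : nat) (hr : (2 <= r)%N)
    (x : nat -> R) (y : nat -> nat -> R) :
  \sum_(T : {ffun 'I_r -> 'I_r} | incr_tree T) wt_y x y T
  = x 1%N * y r r *
    \prod_(2 <= i < r)
      (\sum_(1 <= j < i.+1) x j * y i i + \sum_(i.+1 <= j < r.+1) x i * y i j).
Proof. by case: r hr => [|[|n]] // _; exact: wt_sum_closed_form. Qed.
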